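(* Let $X$ be a nonnegative absolutely continuous random variable with pdf $f$ satisfying $$e^{-\alpha x-\beta}\le f(x)\le 1\qquad\text{for all }x\ge0,$$ where $\alpha>0$ and $\beta\ge0$. Let $\overline F(t)=\mathbb P(X>t)$, $\Lambda(t)=-\log\overline F(t)$, $\delta(t)=\mathbb E[X\mid X>t]$, and for $t\ge0$ let $X_t=[X-t\mid X>t]$ be the residual lifetime with pdf $f_t(x)=f(x+t)/\overline F(t)$, $x>0$. Define the residual entropy $$H(X_t)=-\int_t^\infty\frac{f(x)}{\overline F(t)}\log\frac{f(x)}{\overline F(t)}\,\mathrm dx,$$ the weighted residual entropy $$H^w(X_t)=-\int_t^\infty x\,\frac{f(x)}{\overline F(t)}\log\frac{f(x)}{\overline F(t)}\,\mathrm dx,$$ and the residual varentropy $V(X_t)=\int_t^\infty\frac{f(x)}{\overline F(t)}\big(\log\frac{f(x)}{\overline F(t)}\big)^2\mathrm dx-[H(X_t)]^2$. Then for all $t\ge0$, $$V(X_t)\le\alpha\big[\Lambda(t)\delta(t)+H^w(X_t)\big]+\beta\big[\Lambda(t)+H(X_t)\big]-\big[\Lambda(t)+H(X_t)\big]^2.$$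
   Context: $[X\mid B]$ denotes a random variable distributed as $X$ conditional on the event $B$. The convention $0\log0=0$ is used. *)

From HB Require Import structures.
From mathcomp Require Import all_boot all_order all_algebra.
From mathcomp Require Import all_classical all_reals all_analysis.
Set Implicit Arguments. Unset Strict Implicit. Unset Printing Implicit Defensive.
Import Order.TTheory GRing.Theory Num.Theory.
Import numFieldNormedType.Exports.
Local Open Scope classical_set_scope.
Local Open Scope ring_scope.

Section residual.
Context {R : realType}.
Local Notation mu := (@lebesgue_measure R).

Definition survival d (T : measurableType d) (P : probability T R)
  (X : T -> R) (t : R) : R := fine (P [set w | t < X w]).

Definition cum_hazard d (T : measurableType d) (P : probability T R)
  (X : T -> R) (t : R) : R := - ln (survival P X t).

Definition cond_mean d (T : measurableType d) (P : probability T R)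
  (X : T -> R) (t : R) : R :=
  fine (\int[P]_(w in [set w | t < X w]) (X w)%:E) / survival P X t.

Definition res_entropy d (T : measurableType d) (P : probability T R)
  (X : T -> R) (f : R -> R) (t : R) : R :=
  - Rintegral mu `[t, +oo[
      (fun x => f x / survival P X t * ln (f x / survival P X t)).

Definition wres_entropy d (T : measurableType d) (P : probability T R)
  (X : T -> R) (f : R -> R) (t : R) : R :=
  - Rintegral mu `[t, +oo[
      (fun x => x * (f x / survival P X t) * ln (f x / survival P X t)).

Definition res_varentropy d (T : measurableType d) (P : probability T R)
  (X : T -> R) (f : R -> R) (t : R) : R :=
  Rintegral mu `[t, +oo[
      (fun x => f x / survival P X t * (ln (f x / survival P X t)) ^+ 2)
  - (res_entropy P X f t) ^+ 2.

End residual.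

From HB Require Import structures.
From mathcomp Require Import all_boot all_order all_algebra.
From mathcomp Require Import all_classical all_reals all_analysis.
From mathcomp Require Import measurable_realfun.
From mathcomp Require Import ring lra.
Set Implicit Arguments. Unset Strict Implicit. Unset Printing Implicit Defensive.
Import Order.TTheory GRing.Theory Num.Theory.
Import numFieldNormedType.Exports.
Local Open Scope classical_set_scope.
Local Open Scope ring_scope.

(* Write Fbar for Fbar(t), J_k for the integral over [t, oo) of x^k f log f
   and K for that of f (log f)^2.  Since log (f / Fbar) = log f - log Fbar,
   every residual quantity is an explicit expression in these integrals:
   Lambda + H = - J_0 / Fbar, Lambda delta + H^w = - J_1 / Fbar and
   V = K / Fbar - (J_0 / Fbar)^2.  The inequality therefore reduces to
   K + alpha J_1 + beta J_0 <= 0, whose integrand f log f (log f + alpha x + beta)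
   is pointwise nonpositive: log f <= 0 because f <= 1, and
   log f + alpha x + beta >= 0 by the exponential lower bound.  The one
   measure-theoretic input is E[X; X > t] = int_t^oo x f(x) dx, which follows
   from identifying f with the Radon-Nikodym derivative of the law of X. *)

Section measure_with_density.
Local Open Scope ereal_scope.
Context d (T : measurableType d) (R : realType).
Variables (nu : {finite_measure set T -> \bar R})
  (mu : {sigma_finite_measure set T -> \bar R}) (g : T -> R).
Hypothesis g_meas : measurable_fun setT g.
Hypothesis nu_density : forall A, measurable A ->
  nu A = \int[mu]_(x in A) (g x)%:E.

Lemma density_dominates : nu `<< mu.
Proof.
apply/null_content_dominatesP => A mA muA0; rewrite nu_density //.
apply: null_set_integral => //.
exact/measurable_EFinP/measurable_funTS.
Qed.

Lemma Radon_Nikodym_density_ae :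
  ae_eq mu setT (Radon_Nikodym_SigmaFinite.f nu mu) (EFin \o g).
Proof.
apply: integral_ae_eq => //.
- exact: Radon_Nikodym_SigmaFinite.f_integrable density_dominates.
- exact/measurable_EFinP.
move=> E _ mE; rewrite -nu_density //.
by rewrite -Radon_Nikodym_SigmaFinite.f_integral //; exact: density_dominates.
Qed.

Lemma ge0_integral_density (h : T -> \bar R) (E : set T) :
    measurable E -> measurable_fun E h -> (forall x, E x -> 0 <= h x) ->
  \int[nu]_(x in E) h x = \int[mu]_(x in E) (h x * (g x)%:E).
Proof.
move=> mE mh h0; rewrite integral_mkcond [RHS]integral_mkcond.
have hE0 x : 0 <= (h \_ E) x by rewrite patchE; case: ifPn => // /set_mem; exact: h0.
have mhE : measurable_fun setT (h \_ E) by apply/(measurable_restrictT _ mE).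
rewrite -(Radon_Nikodym_SigmaFinite.change_of_variables density_dominates) //.
have mRN := measurable_int _
  (Radon_Nikodym_SigmaFinite.f_integrable density_dominates).
transitivity (\int[mu]_x ((h \_ E) x * (g x)%:E)); last first.
  by apply: eq_integral => x _; rewrite !patchE; case: ifPn; rewrite ?mul0e.
apply: ae_eq_integral => //.
- exact: emeasurable_funM.
- by apply: emeasurable_funM => //; exact/measurable_EFinP.
- exact/ae_eqe_mul2l/Radon_Nikodym_density_ae.
Qed.

End measure_with_density.

Section Rintegral_lincomb.
Context d (T : measurableType d) (R : realType) (mu : {measure set T -> \bar R}).
Variable D : set T.
Hypothesis mD : measurable D.
Implicit Types u v w : T -> R.

Lemma integrableZl_EFin k u : mu.-integrable D (EFin \o u) ->
  mu.-integrable D (EFin \o (fun x => k * u x)).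
Proof.
by move=> iu; apply: eq_integrable (integrableZl mD k iu).
Qed.

Lemma integrableD_EFin u v :
  mu.-integrable D (EFin \o u) -> mu.-integrable D (EFin \o v) ->
  mu.-integrable D (EFin \o (fun x => u x + v x)).
Proof.
by move=> iu iv; apply: eq_integrable (integrableD mD iu iv).
Qed.

Lemma Rintegral_lincomb2 a b u v :
  mu.-integrable D (EFin \o u) -> mu.-integrable D (EFin \o v) ->
  \int[mu]_(x in D) (a * u x + b * v x) =
  a * \int[mu]_(x in D) u x + b * \int[mu]_(x in D) v x.
Proof.
by move=> iu iv; rewrite RintegralD ?RintegralZl //; exact: integrableZl_EFin.
Qed.

Lemma Rintegral_lincomb3 a b c u v w :
  mu.-integrable D (EFin \o u) -> mu.-integrable D (EFin \o v) ->
  mu.-integrable D (EFin \o w) ->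
  \int[mu]_(x in D) (a * u x + b * v x + c * w x) =
  a * \int[mu]_(x in D) u x + b * \int[mu]_(x in D) v x
    + c * \int[mu]_(x in D) w x.
Proof.
move=> iu iv iw; rewrite RintegralD ?Rintegral_lincomb2 ?RintegralZl //.
  by apply: integrableD_EFin; exact: integrableZl_EFin.
exact: integrableZl_EFin.
Qed.

End Rintegral_lincomb.

Lemma varentropy_integrand_le0 {R : realType} (a b x y : R) :
  expR (- a * x - b) <= y <= 1 ->
  y * ln y ^+ 2 + a * (x * y * ln y) + b * (y * ln y) <= 0.
Proof.
move=> /andP[y_ge y_le1]; have y_gt0 := lt_le_trans (expR_gt0 _) y_ge.
have lny_le0 : ln y <= 0 := ln_le0 y_le1.
have lny_ge : - a * x - b <= ln y by rewrite -ler_expR lnK.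
have -> : y * ln y ^+ 2 + a * (x * y * ln y) + b * (y * ln y) =
    (y * - ln y) * - (ln y + a * x + b) by ring.
apply: mulr_ge0_le0; last by rewrite oppr_le0; lra.
by apply: mulr_ge0; [exact: ltW | rewrite oppr_ge0].
Qed.

Section varentropy_integrals.
Context {R : realType}.
Variables (f : R -> R) (t : R).
Local Notation mu := (@lebesgue_measure R).
Hypothesis int_flogf : mu.-integrable `[t, +oo[ (fun x => (f x * ln (f x))%:E).
Hypothesis int_xflogf :
  mu.-integrable `[t, +oo[ (fun x => (x * f x * ln (f x))%:E).
Hypothesis int_flog2f :
  mu.-integrable `[t, +oo[ (fun x => (f x * ln (f x) ^+ 2)%:E).

Lemma varentropy_integrals_le0 (a b : R) :
  (forall x, t <= x -> expR (- a * x - b) <= f x <= 1) ->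
  \int[mu]_(x in `[t, +oo[) (f x * ln (f x) ^+ 2)
  + a * \int[mu]_(x in `[t, +oo[) (x * f x * ln (f x))
  + b * \int[mu]_(x in `[t, +oo[) (f x * ln (f x)) <= 0.
Proof.
move=> f_bounds; rewrite -[X in X + _ + _]mul1r -Rintegral_lincomb3 //.
apply: (@le_trans _ _ (\int[mu]_(x in `[t, +oo[) 0)); last first.
  by rewrite Rintegral_cst // mul0r.
apply: le_Rintegral => //.
- apply: (@integrableD_EFin _ _ _ mu) => //; last exact: integrableZl_EFin.
  by apply: (@integrableD_EFin _ _ _ mu) => //; exact: integrableZl_EFin.
- exact: (integrable0 mu).
move=> x; rewrite /= in_itv /= andbT mul1r => /f_bounds.
exact: varentropy_integrand_le0.
Qed.

End varentropy_integrals.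

Section distributionR.
Context d (T : measurableType d) (R : realType) (P : probability T R).
Variable X : {RV P >-> R}.

Lemma measurable_RV_Borel : measurable_fun setT (X : T -> measurableTypeR R).
Proof. by move=> mT B mB; exact: (measurable_funPT X) mT B mB. Qed.

(* [lebesgue_measure] lives on [measurableTypeR R], not on the canonical
   measurable structure of [R], so the law of [X] is transported there. *)
Definition distributionR : set (measurableTypeR R) -> \bar R :=
  distribution P X.

HB.instance Definition _ := isMeasure.Build _ _ _ distributionR
  (measure0 (distribution P X)) (measure_ge0 (distribution P X))
  (@measure_semi_sigma_additive _ _ _ (distribution P X)).

HB.instance Definition _ := Measure_isProbability.Build _ _ _ distributionR
  (probability_setT (distribution P X)).

End distributionR.

Section random_variable_with_density.
Context d (T : measurableType d) (R : realType) (P : probability T R).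
Variables (X : {RV P >-> R}) (f : R -> R).
Hypothesis f_ge0 : forall x, 0 <= f x.
Hypothesis f_meas : measurable_fun setT f.
Hypothesis X_pdf : forall A, measurable A ->
  P (X @^-1` A) = (\int[lebesgue_measure]_(x in A) (f x)%:E)%E.
Local Notation mu := (@lebesgue_measure R).

Lemma ge0_integral_preimage_density (A : set R) (h : R -> \bar R) :
    measurable A -> measurable_fun A h -> (forall x, A x -> (0 <= h x)%E) ->
  (\int[P]_(w in X @^-1` A) h (X w) = \int[mu]_(x in A) (h x * (f x)%:E))%E.
Proof.
move=> mA mh h0.
rewrite -(ge0_integral_pushforward (measurable_RV_Borel X)) //; last first.
  by move=> x /set_mem /h0.
exact: (@ge0_integral_density _ _ _ (distributionR X) mu f f_meas X_pdf).
Qed.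

Lemma integrable_density : mu.-integrable setT (EFin \o f).
Proof.
apply/integrableP; split; first exact/measurable_EFinP.
under eq_integral do rewrite /= ger0_norm //.
by rewrite -X_pdf // preimage_setT probability_setT ltry.
Qed.

Lemma preimage_survival_set (t : R) : [set w | t < X w] = X @^-1` `]t, +oo[.
Proof. by apply/seteqP; split => w /=; rewrite in_itv /= andbT. Qed.

Lemma survival_density (t : R) :
  survival P X t = \int[mu]_(x in `[t, +oo[) f x.
Proof.
rewrite /survival preimage_survival_set X_pdf // integral_itv_obnd_cbnd //.
exact/measurable_EFinP/measurable_funTS.
Qed.

Lemma survival_gt0 (t c : R) : 0 < c ->
  (forall x, t <= x <= t + 1 -> c <= f x) -> 0 < survival P X t.
Proof.
move=> c_gt0 c_le_f; rewrite survival_density.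
have mf : measurable_fun setT (EFin \o f) by exact/measurable_EFinP.
have unit_itv_sub : `[t, t + 1] `<=` `[t, +oo[.
  by move=> x /=; rewrite !in_itv /= => /andP[->].
have unit_itv1 : mu `[t, t + 1] = 1%E.
  have := lebesgue_measure_itv `[t, t + 1].
  by rewrite /= lte_fin ltrDl ltr01 -EFinB addrAC subrr add0r.
apply: fine_gt0; apply/andP; split; last first.
  rewrite -ge0_fin_numE; last by apply: integral_ge0 => x _; rewrite lee_fin.
  exact: integrable_fin_num (integrableS _ _ _ integrable_density).
apply: (@lt_le_trans _ _ c%:E); first by rewrite lte_fin.
rewrite -[c%:E]mule1 -unit_itv1 -integral_cst //.
apply: le_trans (ge0_subset_integral mu _ _ _ _ unit_itv_sub) => //; last first.
- by move=> x _; rewrite lee_fin.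
- exact: (measurable_funTS mf).
apply: (@ge0_le_integral _ _ _ mu) => //.
- by move=> x _; rewrite lee_fin ltW.
- exact: (measurable_funTS mf).
Qed.

Lemma cond_mean_density (t : R) : 0 <= t ->
  cond_mean P X t = (\int[mu]_(x in `[t, +oo[) (x * f x)) / survival P X t.
Proof.
move=> t_ge0; rewrite /cond_mean preimage_survival_set; congr (fine _ / _).
rewrite (ge0_integral_preimage_density (h := EFin)) //; last first.
  by move=> x /=; rewrite in_itv /= andbT lee_fin => /ltW/(le_trans t_ge0).
rewrite -integral_itv_obnd_cbnd; first by apply: eq_integral => x _; rewrite EFinM.
by apply/measurable_EFinP/measurable_funTS; exact: measurable_funM.
Qed.
Variable t : R.
Hypothesis t_ge0 : 0 <= t.
Hypothesis f_gt0 : forall x, t <= x -> 0 < f x.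
Hypothesis survival_t_gt0 : 0 < survival P X t.
Hypothesis int_xf : mu.-integrable `[t, +oo[ (fun x => (x * f x)%:E).
Hypothesis int_flogf : mu.-integrable `[t, +oo[ (fun x => (f x * ln (f x))%:E).
Hypothesis int_xflogf :
  mu.-integrable `[t, +oo[ (fun x => (x * f x * ln (f x))%:E).
Hypothesis int_flog2f :
  mu.-integrable `[t, +oo[ (fun x => (f x * ln (f x) ^+ 2)%:E).
Local Notation Fbar := (survival P X t).

Let int_f : mu.-integrable `[t, +oo[ (EFin \o f).
Proof. exact: integrableS integrable_density. Qed.

Let Fbar_neq0 : Fbar != 0. Proof. exact: lt0r_neq0. Qed.

Let ln_div_survival x : x \in [set` `[t, +oo[] ->
  ln (f x / Fbar) = ln (f x) - ln Fbar.
Proof.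
by rewrite inE /= in_itv /= andbT => /f_gt0 fx_gt0; rewrite ln_div // qualifE /=.
Qed.

Lemma res_entropyE : res_entropy P X f t =
  ln Fbar - (\int[mu]_(x in `[t, +oo[) (f x * ln (f x))) / Fbar.
Proof.
rewrite /res_entropy.
have -> : \int[mu]_(x in `[t, +oo[) (f x / Fbar * ln (f x / Fbar)) =
    Fbar^-1 * \int[mu]_(x in `[t, +oo[) (f x * ln (f x))
    + (- ln Fbar / Fbar) * \int[mu]_(x in `[t, +oo[) f x.
  rewrite -Rintegral_lincomb2 //; apply: eq_Rintegral => x xD.
  by rewrite ln_div_survival //; field.
by rewrite -survival_density; field.
Qed.

Lemma wres_entropyE : wres_entropy P X f t =
  ln Fbar * cond_mean P X t
  - (\int[mu]_(x in `[t, +oo[) (x * f x * ln (f x))) / Fbar.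
Proof.
rewrite /wres_entropy.
have -> : \int[mu]_(x in `[t, +oo[) (x * (f x / Fbar) * ln (f x / Fbar)) =
    Fbar^-1 * \int[mu]_(x in `[t, +oo[) (x * f x * ln (f x))
    + (- ln Fbar / Fbar) * \int[mu]_(x in `[t, +oo[) (x * f x).
  rewrite -Rintegral_lincomb2 //; apply: eq_Rintegral => x xD.
  by rewrite ln_div_survival //; field.
by rewrite cond_mean_density //; field.
Qed.

Lemma res_varentropyE : res_varentropy P X f t =
  (\int[mu]_(x in `[t, +oo[) (f x * ln (f x) ^+ 2)) / Fbar
  - ((\int[mu]_(x in `[t, +oo[) (f x * ln (f x))) / Fbar) ^+ 2.
Proof.
rewrite /res_varentropy.
have -> : \int[mu]_(x in `[t, +oo[) (f x / Fbar * ln (f x / Fbar) ^+ 2) =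
    Fbar^-1 * \int[mu]_(x in `[t, +oo[) (f x * ln (f x) ^+ 2)
    + (- (2 * ln Fbar) / Fbar) * \int[mu]_(x in `[t, +oo[) (f x * ln (f x))
    + (ln Fbar ^+ 2 / Fbar) * \int[mu]_(x in `[t, +oo[) f x.
  rewrite -Rintegral_lincomb3 //; apply: eq_Rintegral => x xD.
  by rewrite ln_div_survival //; field.
by rewrite res_entropyE -survival_density; field.
Qed.

End random_variable_with_density.

Theorem theorem3p9 (R : realType) (d : measure_display) (T : measurableType d)
  (P : probability T R) (X : {RV P >-> R}) (f : R -> R) (alpha beta : R)
  (X_ge0 : forall w, 0 <= X w)
  (f_meas : measurable_fun setT f)
  (f_ge0 : forall x, 0 <= f x)
  (X_pdf : forall A, measurable A ->
     P (X @^-1` A) = (\int[lebesgue_measure]_(x in A) (f x)%:E)%E)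
  (alpha_gt0 : 0 < alpha) (beta_ge0 : 0 <= beta)
  (f_bounds : forall x, 0 <= x -> expR (- alpha * x - beta) <= f x <= 1)
  (int_xf : lebesgue_measure.-integrable `[0, +oo[
              (fun x => (x * f x)%:E))
  (int_flogf : lebesgue_measure.-integrable `[0, +oo[
              (fun x => (f x * ln (f x))%:E))
  (int_xflogf : lebesgue_measure.-integrable `[0, +oo[
              (fun x => (x * f x * ln (f x))%:E))
  (int_flog2f : lebesgue_measure.-integrable `[0, +oo[
              (fun x => (f x * (ln (f x)) ^+ 2)%:E))
  (t : R) (t_ge0 : 0 <= t) :
  res_varentropy P X f t <=
    alpha * (cum_hazard P X t * cond_mean P X t + wres_entropy P X f t)
    + beta * (cum_hazard P X t + res_entropy P X f t)
    - (cum_hazard P X t + res_entropy P X f t) ^+ 2.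
Proof.
have int_t (g : R -> R) :
    lebesgue_measure.-integrable `[0, +oo[ (EFin \o g) ->
    lebesgue_measure.-integrable `[t, +oo[ (EFin \o g).
  apply: integrableS => // x /=; rewrite !in_itv /= !andbT; exact: le_trans.
have f_bounds_t x : t <= x -> expR (- alpha * x - beta) <= f x <= 1.
  by move=> tx; apply: f_bounds (le_trans t_ge0 tx).
have f_gt0 x : t <= x -> 0 < f x.
  by move=> /f_bounds_t /andP[+ _]; exact: lt_le_trans (expR_gt0 _).
have S_gt0 : 0 < survival P X t.
  apply: (survival_gt0 f_ge0 f_meas X_pdf (expR_gt0 (- alpha * (t + 1) - beta))).
  move=> x /andP[tx xt1]; have /andP[+ _] := f_bounds_t x tx; apply: le_trans.
  by rewrite ler_expR lerD2r !mulNr lerN2 ler_pM2l.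
rewrite (res_varentropyE f_ge0 f_meas X_pdf f_gt0 S_gt0
  (int_t _ int_flogf) (int_t _ int_flog2f)).
rewrite (wres_entropyE f_meas X_pdf t_ge0 f_gt0 S_gt0
  (int_t _ int_xf) (int_t _ int_xflogf)).
rewrite (res_entropyE f_ge0 f_meas X_pdf f_gt0 S_gt0 (int_t _ int_flogf)).
rewrite /cum_hazard mulNr !addKr sqrrN lerD2r.
have := varentropy_integrals_le0 (int_t _ int_flogf) (int_t _ int_xflogf)
  (int_t _ int_flog2f) f_bounds_t.
have Sinv_ge0 : 0 <= (survival P X t)^-1 by rewrite invr_ge0 ltW.
by move=> /mulr_le0_ge0 /(_ Sinv_ge0); lra.
Qed.
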